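(* Let $L_1,\ldots,L_r$, $\Lambda$ and $\mathcal F(\boldsymbol\alpha;P)$ be as follows: $L_i(\mathbf x)=\sum_{j\le n}\lambda_{i,j}x_j$ are real linear forms such that for every $\boldsymbol\alpha\in\mathbb{R}^r\setminus\{\mathbf0\}$ the form $\boldsymbol\alpha\cdot\mathbf L$ does not have all coefficients rational; $\Lambda$ is the $n\times r$ matrix with $(j,i)$ entry $\lambda_{i,j}$; and $\mathcal F(\boldsymbol\alpha;P)=\sup_{q\in\mathbb N,\mathbf a\in\mathbb Z^n}\prod_{v\le n}(q+P|q\lambda_v-a_v|)^{-1}$ with $\boldsymbol\lambda=\Lambda\boldsymbol\alpha$. Let $\theta$ be a small positive real number. Then there exists a function $T:[1,\infty)\to[1,\infty)$, increasing monotonically to infinity, such that $T(P)\le P^\theta$ for all $P$ and \[ \sup_{P^{\theta-1}\le|\Lambda\boldsymbol\alpha|\le T(P)}\mathcal F(\boldsymbol\alpha;P)\le T(P)^{-1}. \]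
   Context: $|\mathbf y|=\max_i|y_i|$ for vectors. *)

From Stdlib Require Import Reals Lra ZArith QArith.
Open Scope R_scope.

(* Vectors in R^n are functions nat -> R; only indices < n matter. *)

Fixpoint sumR (n : nat) (f : nat -> R) : R :=
  match n with O => 0 | S m => sumR m f + f m end.

Fixpoint prodR (n : nat) (f : nat -> R) : R :=
  match n with O => 1 | S m => prodR m f * f m end.

Fixpoint supnorm (n : nat) (y : nat -> R) : R :=
  match n with O => 0 | S m => Rmax (supnorm m y) (Rabs (y m)) end.

(* lam i j = lambda_{i,j}: coefficient of x_j in L_i, i < r, j < n. *)

Definition comb_coef (r : nat) (lam : nat -> nat -> R) (alpha : nat -> R) (j : nat) : R :=
  sumR r (fun i => alpha i * lam i j).

(* Lambda alpha, where Lambda is the n x r matrix with (j,i) entry lambda_{i,j} *)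
Definition LamMul (r : nat) (lam : nat -> nat -> R) (alpha : nat -> R) : nat -> R :=
  fun j => sumR r (fun i => lam i j * alpha i).

Definition is_rational (x : R) : Prop := exists q : Q, x = Q2R q.

Definition irrational_hyp (n r : nat) (lam : nat -> nat -> R) : Prop :=
  forall alpha : nat -> R,
    (exists i, (i < r)%nat /\ alpha i <> 0) ->
    ~ (forall j, (j < n)%nat -> is_rational (comb_coef r lam alpha j)).

Definition Fterm (n r : nat) (lam : nat -> nat -> R) (alpha : nat -> R) (P : R)
    (q : nat) (a : nat -> Z) : R :=
  prodR n (fun v => / (INR q + P * Rabs (INR q * LamMul r lam alpha v - IZR (a v)))).

Definition F_le (n r : nat) (lam : nat -> nat -> R) (alpha : nat -> R) (P c : R) : Prop :=
  forall (q : nat) (a : nat -> Z), (1 <= q)%nat -> Fterm n r lam alpha P q a <= c.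

(* If every factor of the product F(alpha;P) exceeded 1/T, then q < T and the
   integer vector a would be a nonzero point of the box |a_v| <= T^2 + 1 within
   distance T/P of the vector q Lambda alpha of the image of Lambda (a = 0 is
   excluded by |Lambda alpha| >= P^(theta-1)).  The irrationality hypothesis keeps
   nonzero integer points off the image of Lambda, which is closed, so the finitely
   many points of each box stay at some distance e > 0 from it.  T(P) is then
   chosen to grow so slowly that T <= P^theta and T <= P e for the box attached to T. *)

From Stdlib Require Import Reals Lra ZArith QArith Lia List.
From Stdlib Require Import Classical IndefiniteDescription FunctionalExtensionality.
Open Scope R_scope.

Definition upd {A : Type} (f : nat -> A) (k : nat) (x : A) : nat -> A :=
  fun v => if Nat.eq_dec v k then x else f v.

Lemma upd_same {A : Type} (f : nat -> A) k x : upd f k x k = x.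
Proof. unfold upd; destruct (Nat.eq_dec k k); congruence. Qed.

Lemma upd_other {A : Type} (f : nat -> A) k x v : v <> k -> upd f k x v = f v.
Proof. unfold upd; destruct (Nat.eq_dec v k); congruence. Qed.

Lemma supnorm_ge0 n y : 0 <= supnorm n y.
Proof. induction n; simpl; [lra|]. eapply Rle_trans; [exact IHn | apply Rmax_l]. Qed.

Lemma supnorm_ge n y v : (v < n)%nat -> Rabs (y v) <= supnorm n y.
Proof.
  induction n as [|n IH]; intros Hv; [lia|]. simpl.
  destruct (Nat.eq_dec v n) as [->|Hne]; [apply Rmax_r|].
  eapply Rle_trans; [apply IH; lia | apply Rmax_l].
Qed.

Lemma supnorm_le n y c :
  0 <= c -> (forall v, (v < n)%nat -> Rabs (y v) <= c) -> supnorm n y <= c.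
Proof. induction n; simpl; intros Hc H; auto. apply Rmax_lub; auto. Qed.

Lemma supnorm_attain n y :
  (1 <= n)%nat -> exists v, (v < n)%nat /\ supnorm n y = Rabs (y v).
Proof.
  induction n as [|n IH]; intros Hn; [lia|]. simpl.
  destruct n as [|n].
  - exists 0%nat. split; [lia|]. simpl. apply Rmax_right, Rabs_pos.
  - destruct IH as [v [Hv E]]; [lia|]. unfold Rmax. destruct (Rle_dec _ _).
    + exists (S n). auto.
    + exists v. split; [lia | exact E].
Qed.

Lemma supnorm_ext n y z :
  (forall v, (v < n)%nat -> y v = z v) -> supnorm n y = supnorm n z.
Proof.
  induction n; simpl; intros H; auto.
  rewrite IHn by (intros; apply H; lia). rewrite H by lia. reflexivity.
Qed.

Lemma prodR_pos n f : (forall v, (v < n)%nat -> 0 < f v) -> 0 < prodR n f.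
Proof. induction n; simpl; intros H; [lra|]. apply Rmult_lt_0_compat; auto. Qed.

Lemma prodR_le1 n f : (forall v, (v < n)%nat -> 0 < f v <= 1) -> prodR n f <= 1.
Proof.
  induction n; simpl; intros H; [lra|].
  assert (prodR n f <= 1) by auto.
  assert (0 < prodR n f) by (apply prodR_pos; intros; apply H; lia).
  destruct (H n); [lia|]. nra.
Qed.

Lemma prodR_le_factor n f v :
  (forall u, (u < n)%nat -> 0 < f u <= 1) -> (v < n)%nat -> prodR n f <= f v.
Proof.
  induction n as [|n IH]; simpl; intros H Hv; [lia|].
  assert (prodR n f <= 1) by (apply prodR_le1; auto).
  assert (0 < prodR n f) by (apply prodR_pos; intros; apply H; lia).
  destruct (H n) as [Hn0 Hn1]; [lia|].
  destruct (Nat.eq_dec v n) as [->|Hne]; [nra|].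
  assert (prodR n f <= f v) by (apply IH; auto; lia).
  destruct (H v); [lia|]. nra.
Qed.

Lemma LamMul_S r lam b v : LamMul (S r) lam b v = LamMul r lam b v + lam r v * b r.
Proof. reflexivity. Qed.

Lemma LamMul_agree r lam a b v :
  (forall i, (i < r)%nat -> a i = b i) -> LamMul r lam a v = LamMul r lam b v.
Proof.
  unfold LamMul. induction r; simpl; intros H; auto.
  rewrite IHr, H by (auto; intros; apply H; lia). reflexivity.
Qed.

Lemma LamMul_scal r lam c b v : LamMul r lam (fun i => c * b i) v = c * LamMul r lam b v.
Proof. unfold LamMul. induction r; simpl; [ring | rewrite IHr; ring]. Qed.

Lemma LamMul_zero r lam v : LamMul r lam (fun _ => 0) v = 0.
Proof. unfold LamMul. induction r; simpl; [ring | rewrite IHr; ring]. Qed.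

Lemma comb_coef_LamMul r lam alpha j : comb_coef r lam alpha j = LamMul r lam alpha j.
Proof. unfold comb_coef, LamMul. induction r; simpl; [ring | rewrite IHr; ring]. Qed.

Definition in_image (n r : nat) (lam : nat -> nat -> R) (x : nat -> R) : Prop :=
  exists b, forall v, (v < n)%nat -> x v = LamMul r lam b v.

(* One step of Gaussian elimination with pivot row [p]: subtract [y p] times the
   column [c]; the pivot entry becomes 0 when [c p = 1]. *)
Definition sweep (c : nat -> R) (p : nat) (y : nat -> R) : nat -> R :=
  fun u => y u - y p * c u.

Lemma LamMul_sweep r lam c p b u :
  LamMul r (fun i => sweep c p (lam i)) b u = sweep c p (LamMul r lam b) u.
Proof. unfold LamMul, sweep. induction r; simpl; [ring | rewrite IHr; ring]. Qed.

Section Elimination.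

Variables (n r p : nat) (lam : nat -> nat -> R) (c x : nat -> R).
Hypothesis p_lt : (p < n)%nat.
Hypothesis pivot_nz : lam r p <> 0.
Hypothesis last_col : forall u, lam r u = lam r p * c u.

Let swept := fun i => sweep c p (lam i).

Lemma residual_sweep b u :
  x u - LamMul (S r) lam b u
  = (sweep c p x u - LamMul r swept b u) + (x p - LamMul (S r) lam b p) * c u.
Proof. unfold swept. rewrite LamMul_sweep. unfold sweep. rewrite !LamMul_S, last_col. ring. Qed.

Lemma sweep_not_in_image : ~ in_image n (S r) lam x -> ~ in_image n r swept (sweep c p x).
Proof.
  intros Hx [g Hg]. apply Hx.
  set (t := (x p - LamMul r lam g p) / lam r p).
  exists (upd g r t). intros v Hv.
  assert (Hbelow : forall M u, LamMul r M (upd g r t) u = LamMul r M g u)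
    by (intros; apply LamMul_agree; intros i Hi; apply upd_other, Nat.lt_neq, Hi).
  apply Rminus_diag_uniq.
  rewrite residual_sweep, !LamMul_S, !Hbelow, upd_same, <- Hg by exact Hv.
  replace (x p - (LamMul r lam g p + lam r p * t)) with 0 by (unfold t; field; exact pivot_nz).
  lra.
Qed.

(* The pivot entry [z] of a residual bounds its norm from below, and it is also the
   only obstruction to the residual being a swept residual. *)
Lemma dist_of_swept_dist eta :
  (forall b, eta <= supnorm n (fun v => sweep c p x v - LamMul r swept b v)) ->
  forall b, eta / (1 + supnorm n c) <= supnorm n (fun v => x v - LamMul (S r) lam b v).
Proof.
  intros Hdist b.
  set (C := supnorm n c). assert (HC : 0 <= C) by apply supnorm_ge0.
  set (z := x p - LamMul (S r) lam b p).
  set (res := fun v => x v - LamMul (S r) lam b v).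
  assert (Hz : Rabs z <= supnorm n res) by exact (supnorm_ge n res p p_lt).
  assert (Hbound : eta <= supnorm n res + Rabs z * C).
  { eapply Rle_trans; [apply Hdist|]. apply supnorm_le.
    - pose proof (Rabs_pos z). apply Rplus_le_le_0_compat; [apply supnorm_ge0 | nra].
    - intros u Hu.
      replace (sweep c p x u - LamMul r swept b u) with (res u + - (z * c u))
        by (unfold res; rewrite residual_sweep; fold z; ring).
      eapply Rle_trans; [apply Rabs_triang|]. rewrite Rabs_Ropp, Rabs_mult.
      apply Rplus_le_compat; [exact (supnorm_ge n res u Hu)|].
      apply Rmult_le_compat_l; [apply Rabs_pos | exact (supnorm_ge n c u Hu)]. }
  apply Rmult_le_reg_r with (1 + C); [lra|].
  unfold Rdiv. rewrite Rmult_assoc, Rinv_l by lra. pose proof (Rabs_pos z). nra.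
Qed.

End Elimination.

Lemma image_dist_pos n r lam x :
  ~ in_image n r lam x ->
  exists eta, 0 < eta /\ forall b, eta <= supnorm n (fun v => x v - LamMul r lam b v).
Proof.
  revert lam x. induction r as [|r IH]; intros lam x Hx.
  - destruct (classic (exists v, (v < n)%nat /\ x v <> 0)) as [[v [Hv Hxv]] | Hzero].
    + exists (Rabs (x v)). split; [apply Rabs_pos_lt; exact Hxv|].
      intros b. eapply Rle_trans; [|apply (supnorm_ge _ _ v Hv)].
      right. unfold LamMul; simpl. f_equal. ring.
    + exfalso. apply Hx. exists (fun _ => 0). intros v Hv. unfold LamMul; simpl.
      apply NNPP. intro Hxv. apply Hzero. exists v. auto.
  - destruct (classic (exists p, (p < n)%nat /\ lam r p <> 0)) as [[p [Hp Hpiv]] | Hzero].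
    + set (c := fun u => lam r u / lam r p).
      assert (Hc : forall u, lam r u = lam r p * c u) by (intros; unfold c; field; exact Hpiv).
      destruct (IH _ _ (sweep_not_in_image n r p lam c x Hpiv Hc Hx)) as [eta [Heta Hdist]].
      exists (eta / (1 + supnorm n c)).
      split; [apply Rdiv_lt_0_compat; [|pose proof (supnorm_ge0 n c)]; lra|].
      exact (dist_of_swept_dist n r p lam c x Hp Hc eta Hdist).
    + assert (Hdrop : forall b v, (v < n)%nat -> LamMul (S r) lam b v = LamMul r lam b v).
      { intros b v Hv. rewrite LamMul_S.
        replace (lam r v) with 0 by (apply NNPP; intro; apply Hzero; eauto). ring. }
      destruct (IH lam x) as [eta [Heta Hdist]].
      { intros [b Hb]. apply Hx. exists b. intros v Hv. rewrite Hdrop; auto. }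
      exists eta. split; [exact Heta|]. intros b.
      rewrite (supnorm_ext n _ (fun v => x v - LamMul r lam b v)); [apply Hdist|].
      intros v Hv. rewrite Hdrop; auto.
Qed.

Lemma Q2R_inject_Z z : Q2R (inject_Z z) = IZR z.
Proof. unfold Q2R, inject_Z; simpl. field. Qed.

Lemma integer_point_not_in_image n r lam (a : nat -> Z) :
  irrational_hyp n r lam -> (exists v, (v < n)%nat /\ a v <> 0%Z) ->
  ~ in_image n r lam (fun v => IZR (a v)).
Proof.
  intros Hirr [v0 [Hv0 Ha0]] [al Hal].
  destruct (classic (exists i, (i < r)%nat /\ al i <> 0)) as [Hnz | Hz].
  - apply (Hirr al Hnz). intros j Hj. exists (inject_Z (a j)).
    rewrite Q2R_inject_Z, comb_coef_LamMul. symmetry. exact (Hal j Hj).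
  - assert (Hal0 : forall i, (i < r)%nat -> al i = 0).
    { intros i Hi. apply NNPP. intro. apply Hz. eauto. }
    apply Ha0, eq_IZR. rewrite Hal, (LamMul_agree r lam al (fun _ => 0) v0 Hal0) by exact Hv0.
    apply LamMul_zero.
Qed.

Section UniformBound.

Variable A : Type.
Variable Q : A -> R -> Prop.
Hypothesis Q_antitone : forall a e e', Q a e -> 0 < e' <= e -> Q a e'.

Lemma uniform_bound_list (l : list A) :
  (forall a, In a l -> exists e, 0 < e /\ Q a e) ->
  exists e, 0 < e /\ forall a, In a l -> Q a e.
Proof.
  induction l as [|a0 l IH]; intros H.
  - exists 1. split; [lra | intros a []].
  - destruct (H a0 (in_eq a0 l)) as [e0 [He0 HQ0]].
    destruct IH as [e [He HQ]]; [intros; apply H; right; auto|].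
    exists (Rmin e0 e). split; [apply Rmin_glb_lt; auto|].
    intros a [<- | Ha].
    + apply Q_antitone with e0; auto. split; [apply Rmin_glb_lt; auto | apply Rmin_l].
    + apply Q_antitone with e; auto. split; [apply Rmin_glb_lt; auto | apply Rmin_r].
Qed.

End UniformBound.

Definition Zrange (N : Z) : list Z :=
  map (fun k => Z.of_nat k - N)%Z (seq 0 (Z.to_nat (2 * N + 1))).

Lemma in_Zrange N c : In c (Zrange N) <-> (Z.abs c <= N)%Z.
Proof.
  unfold Zrange. rewrite in_map_iff. split.
  - intros [k [<- Hk]]. apply in_seq in Hk. lia.
  - intros Hc. exists (Z.to_nat (c + N)). rewrite in_seq. lia.
Qed.

Definition in_box (N : Z) (k : nat) (a : nat -> Z) : Prop :=
  forall v, (v < k)%nat -> (Z.abs (a v) <= N)%Z.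

(* The coordinates from [k] on are frozen to those of [b], so that the box is finite. *)
Lemma uniform_bound_box (N : Z) (Q : (nat -> Z) -> R -> Prop) :
  (forall a e e', Q a e -> 0 < e' <= e -> Q a e') ->
  forall k (b : nat -> Z),
  (forall a, in_box N k a -> (forall v, (k <= v)%nat -> a v = b v) ->
     exists e, 0 < e /\ Q a e) ->
  exists e, 0 < e /\ forall a, in_box N k a -> (forall v, (k <= v)%nat -> a v = b v) -> Q a e.
Proof.
  intros Q_antitone k. induction k as [|k IH]; intros b H.
  - destruct (H b) as [e [He HQ]]; [intros v Hv; lia | auto |].
    exists e. split; [exact He|]. intros a _ Ha.
    replace a with b; [exact HQ|].
    apply functional_extensionality. intros v. symmetry. apply Ha. lia.
  - destruct (uniform_bound_list Z
      (fun c e => forall a, in_box N k a -> (forall v, (k <= v)%nat -> a v = upd b k c v) -> Q a e)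
      ltac:(intros c e e' HQ He a Ha Hb; apply Q_antitone with e; auto)
      (Zrange N)) as [e [He HQ]].
    + intros c Hc. apply in_Zrange in Hc. apply IH. intros a Ha Hb. apply H.
      * intros v Hv. destruct (Nat.eq_dec v k) as [->|Hne].
        -- rewrite Hb, upd_same by lia. exact Hc.
        -- apply Ha. lia.
      * intros v Hv. rewrite Hb, upd_other by lia. reflexivity.
    + exists e. split; [exact He|]. intros a Ha Hb.
      apply (HQ (a k)); [apply in_Zrange, Ha; lia | intros v Hv; apply Ha; lia |].
      intros v Hv. destruct (Nat.eq_dec v k) as [->|Hne].
      * rewrite upd_same. reflexivity.
      * rewrite upd_other by exact Hne. apply Hb. lia.
Qed.

Definition box_separated (n r : nat) (lam : nat -> nat -> R) (B e : R) : Prop :=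
  forall a : nat -> Z,
    (forall v, (v < n)%nat -> Rabs (IZR (a v)) <= B) ->
    (exists v, (v < n)%nat /\ a v <> 0%Z) ->
    forall al, e <= supnorm n (fun v => IZR (a v) - LamMul r lam al v).

Lemma separation_bound n r lam :
  irrational_hyp n r lam -> forall B : R, exists e, 0 < e /\ box_separated n r lam B e.
Proof.
  intros Hirr B.
  destruct (uniform_bound_box (up B)
    (fun (a : nat -> Z) (e : R) => (exists v, (v < n)%nat /\ a v <> 0%Z) ->
       forall al, e <= supnorm n (fun v => IZR (a v) - LamMul r lam al v)))
    with (k := n) (b := fun _ : nat => 0%Z) as [e [He Hsep]].
  - intros a e e' HQ He' Hnz al. specialize (HQ Hnz al). lra.
  - intros a _ _. destruct (classic (exists v, (v < n)%nat /\ a v <> 0%Z)) as [Hnz | Hz].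
    + destruct (image_dist_pos n r lam _ (integer_point_not_in_image n r lam a Hirr Hnz))
        as [e [He Hdist]].
      exists e. auto.
    + exists 1. split; [lra | intros Hnz; contradiction].
  - exists e. split; [exact He|]. intros a Ha Hnz al.
    (* Only the first [n] coordinates matter, so [a] may be truncated into the box. *)
    set (a' := fun v => if Nat.ltb v n then a v else 0%Z).
    assert (Ea : forall v, (v < n)%nat -> a' v = a v).
    { intros v Hv. unfold a'. destruct (Nat.ltb_spec v n); [reflexivity | lia]. }
    rewrite (supnorm_ext n _ (fun v => IZR (a' v) - LamMul r lam al v))
      by (intros v Hv; rewrite Ea; auto).
    apply Hsep.
    + intros v Hv. rewrite Ea by exact Hv. specialize (Ha v Hv).
      rewrite <- abs_IZR in Ha. destruct (archimed B) as [HB _].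
      apply Z.lt_le_incl, lt_IZR. lra.
    + intros v Hv. unfold a'. destruct (Nat.ltb_spec v n); [lia | reflexivity].
    + destruct Hnz as [v [Hv Hav]]. exists v. rewrite Ea; auto.
Qed.

Lemma up_le x y : x <= y -> (up x <= up y)%Z.
Proof.
  intros H. destruct (archimed x) as [Hx1 Hx2]. destruct (archimed y) as [Hy1 Hy2].
  apply Z.lt_pred_le, lt_IZR. rewrite <- Z.sub_1_r, minus_IZR. lra.
Qed.

Section Level.

Variable f : nat -> R.
Hypothesis f_mono : forall k l, (k <= l)%nat -> f k <= f l.
Hypothesis f_ge_id : forall k, INR k <= f k.

Fixpoint count_le (P : R) (m : nat) : nat :=
  match m with
  | O => O
  | S m' => (count_le P m' + if Rle_dec (f m) P then 1 else 0)%nat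
  end.

Lemma count_le_full P m : (forall k, (k <= m)%nat -> f k <= P) -> count_le P m = m.
Proof.
  induction m as [|m IH]; simpl; intros H; [reflexivity|].
  rewrite IH by (intros; apply H; lia).
  destruct (Rle_dec (f (S m)) P) as [_|Hn]; [lia | exfalso; apply Hn, H; lia].
Qed.

Lemma count_le_spec P m : count_le P m = O \/ f (count_le P m) <= P.
Proof.
  induction m as [|m IH]; simpl; [auto|].
  destruct (Rle_dec (f (S m)) P) as [Hle|_].
  - right. rewrite count_le_full.
    + replace (m + 1)%nat with (S m) by lia. exact Hle.
    + intros k Hk. apply Rle_trans with (f (S m)); [apply f_mono; lia | exact Hle].
  - rewrite Nat.add_0_r. exact IH.
Qed.

Lemma count_le_mono P1 P2 m1 m2 :
  P1 <= P2 -> (m1 <= m2)%nat -> (count_le P1 m1 <= count_le P2 m2)%nat.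
Proof.
  intros HP Hm. induction Hm as [|m2 Hm IH].
  - induction m1 as [|m IH]; simpl; [lia|].
    destruct (Rle_dec (f (S m)) P1); destruct (Rle_dec (f (S m)) P2); try lia. lra.
  - simpl. lia.
Qed.

(* The number of [k] in [1 .. up P] with [f k <= P]; larger [k] fail since [f k >= k]. *)
Definition level (P : R) : nat := count_le P (Z.to_nat (up P)).

Lemma level_mono P1 P2 : P1 <= P2 -> (level P1 <= level P2)%nat.
Proof.
  intros H. apply count_le_mono; [exact H|].
  pose proof (up_le P1 P2 H). lia.
Qed.

Lemma level_spec P : level P = O \/ f (level P) <= P.
Proof. apply count_le_spec. Qed.

Lemma level_unbounded K : exists P0, 1 <= P0 /\ forall P, P0 <= P -> (K <= level P)%nat.
Proof.
  exists (Rmax 1 (f K)). split; [apply Rmax_l|]. intros P HP.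
  pose proof (Rmax_r 1 (f K)) as HfK.
  assert (HKup : (K <= Z.to_nat (up P))%nat).
  { destruct (archimed P) as [Hup _]. pose proof (f_ge_id K).
    rewrite INR_IZR_INZ in *. apply Nat2Z.inj_le. rewrite Z2Nat.id.
    - apply Z.lt_le_incl, lt_IZR. lra.
    - apply le_IZR. pose proof (pos_INR K). rewrite INR_IZR_INZ in *. lra. }
  rewrite <- (count_le_full P K) at 1.
  - apply count_le_mono; [lra | exact HKup].
  - intros k Hk. apply Rle_trans with (f K); [apply f_mono; exact Hk | lra].
Qed.

End Level.

Fixpoint running_max (g : nat -> R) (k : nat) : R :=
  match k with O => g O | S k' => Rmax (running_max g k') (g k) end.

Lemma running_max_ge g k : g k <= running_max g k.
Proof. destruct k; simpl; [lra | apply Rmax_r]. Qed.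

Lemma running_max_mono g k l : (k <= l)%nat -> running_max g k <= running_max g l.
Proof. induction 1; simpl; [lra | eapply Rle_trans; [exact IHle | apply Rmax_l]]. Qed.

(* [k P] is the largest [k] such that [(j+1)^(1/theta) <= P] and [j+1 <= P e_j]
   for all [j <= k] (or 0); the running maximum makes it monotone in [P]. *)
Lemma slow_level (theta : R) (e : nat -> R) :
  0 < theta -> (forall k, 0 < e k) ->
  exists k : R -> nat,
    (forall P1 P2, P1 <= P2 -> (k P1 <= k P2)%nat) /\
    (forall M, exists P0, 1 <= P0 /\ forall P, P0 <= P -> M <= INR (S (k P))) /\
    (forall P, 1 <= P -> INR (S (k P)) <= Rpower P theta) /\
    (forall P, (1 <= k P)%nat -> INR (S (k P)) <= P * e (k P)).
Proof.
  intros Htheta He.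
  set (g := fun k => Rmax (INR k) (Rmax (Rpower (INR (S k)) (/ theta)) (INR (S k) / e k))).
  set (f := running_max g).
  assert (f_mono : forall k l, (k <= l)%nat -> f k <= f l) by apply running_max_mono.
  assert (f_ge_g : forall k, g k <= f k) by apply running_max_ge.
  assert (f_ge_id : forall k, INR k <= f k)
    by (intros k; eapply Rle_trans; [apply Rmax_l | apply f_ge_g]).
  assert (Hg : forall P, (1 <= level f P)%nat -> g (level f P) <= P).
  { intros P H1. destruct (level_spec f f_mono P) as [E|Hle]; [lia|].
    eapply Rle_trans; [apply f_ge_g | exact Hle]. }
  exists (level f). split; [|split; [|split]].
  - apply level_mono.
  - intros M. destruct (INR_archimed 1 M) as [K HK]; [lra|].
    destruct (level_unbounded f f_mono f_ge_id K) as [P0 [HP0 HK']].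
    exists P0. split; [exact HP0|]. intros P HP. specialize (HK' P HP).
    apply le_INR in HK'. rewrite S_INR. lra.
  - intros P HP. destruct (Nat.eq_dec (level f P) 0) as [E|Hne].
    + rewrite E. simpl. rewrite <- (Rpower_O P) by lra. apply Rle_Rpower; lra.
    + set (T := INR (S (level f P))).
      assert (HT : 0 < T) by apply lt_0_INR, Nat.lt_0_succ.
      assert (Hpow : Rpower T (/ theta) <= P).
      { eapply Rle_trans; [|apply Hg; lia]. eapply Rle_trans; [apply Rmax_l | apply Rmax_r]. }
      replace T with (Rpower (Rpower T (/ theta)) theta).
      * apply Rle_Rpower_l; [lra|]. split; [apply exp_pos | exact Hpow].
      * rewrite Rpower_mult, Rinv_l, Rpower_1 by lra. reflexivity.
  - intros P H1. pose proof (He (level f P)) as Hek.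
    assert (Hdiv : INR (S (level f P)) / e (level f P) <= P).
    { eapply Rle_trans; [|apply Hg, H1]. eapply Rle_trans; [apply Rmax_r | apply Rmax_r]. }
    apply Rmult_le_reg_r with (/ e (level f P)); [apply Rinv_0_lt_compat, Hek|].
    rewrite Rmult_assoc, Rinv_r by lra. lra.
Qed.

Lemma Fterm_factor_bounds P q x :
  0 <= P -> (1 <= q)%nat -> 0 < / (INR q + P * Rabs x) <= 1.
Proof.
  intros HP Hq. apply le_INR in Hq. simpl in Hq.
  assert (0 <= P * Rabs x) by (apply Rmult_le_pos; [lra | apply Rabs_pos]).
  split; [apply Rinv_0_lt_compat; lra|].
  rewrite <- Rinv_1. apply Rinv_le_contravar; lra.
Qed.

Lemma F_le_one n r lam alpha P : 0 <= P -> F_le n r lam alpha P 1.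
Proof.
  intros HP q a Hq. apply prodR_le1. intros v _. apply Fterm_factor_bounds; assumption.
Qed.

Section SmallFactors.

Variables (n r : nat) (lam : nat -> nat -> R) (alpha : nat -> R).
Variables (P T : R) (q : nat) (a : nat -> Z).
Let lamv := LamMul r lam alpha.
Hypothesis all_small :
  forall v, (v < n)%nat -> INR q + P * Rabs (INR q * lamv v - IZR (a v)) < T.
Hypothesis q_pos : (1 <= q)%nat.
Hypothesis P_ge1 : 1 <= P.

Lemma small_factors_nonzero_numerator theta :
  Rpower P (theta - 1) <= supnorm n lamv -> T <= Rpower P theta ->
  exists v, (v < n)%nat /\ a v <> 0%Z.
Proof.
  intros Hlo HT. apply NNPP. intros Hzero.
  assert (Hn : (1 <= n)%nat).
  { destruct n; [|lia]. pose proof (exp_pos ((theta - 1) * ln P)). simpl in Hlo.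
    unfold Rpower in Hlo. lra. }
  destruct (supnorm_attain n lamv Hn) as [v [Hv Ev]].
  assert (Hav : a v = 0%Z) by (apply NNPP; intro; apply Hzero; eauto).
  pose proof (all_small v Hv) as Hsmall. rewrite Hav, Rminus_0_r, Rabs_mult, Rabs_right in Hsmall
    by (apply Rle_ge, pos_INR).
  assert (Hsplit : Rpower P theta = P * Rpower P (theta - 1)).
  { rewrite <- (Rpower_1 P) at 2 by lra. rewrite <- Rpower_plus. f_equal. ring. }
  apply le_INR in q_pos. simpl in q_pos. pose proof (Rabs_pos (lamv v)).
  rewrite Ev in Hlo.
  assert (P * Rpower P (theta - 1) <= P * Rabs (lamv v)) by (apply Rmult_le_compat_l; lra).
  assert (P * Rabs (lamv v) <= P * (INR q * Rabs (lamv v)))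
    by (apply Rmult_le_compat_l; [lra | nra]).
  lra.
Qed.

Lemma small_factors_bound_numerators :
  supnorm n lamv <= T -> T <= P ->
  forall v, (v < n)%nat -> Rabs (IZR (a v)) <= T * T + 1.
Proof.
  intros Hhi HTP v Hv. pose proof (all_small v Hv) as Hsmall.
  set (d := INR q * lamv v - IZR (a v)) in Hsmall.
  assert (Hd : Rabs d < 1) by (pose proof (Rabs_pos d); pose proof (pos_INR q); nra).
  assert (Hq : INR q <= T) by (pose proof (Rabs_pos d); nra).
  assert (Hlv : Rabs (lamv v) <= T) by (eapply Rle_trans; [apply supnorm_ge, Hv | exact Hhi]).
  replace (IZR (a v)) with (INR q * lamv v - d) by (unfold d; ring).
  unfold Rminus. eapply Rle_trans; [apply Rabs_triang|].
  rewrite Rabs_Ropp, Rabs_mult, Rabs_right by (apply Rle_ge, pos_INR).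
  pose proof (pos_INR q). pose proof (Rabs_pos (lamv v)). nra.
Qed.

End SmallFactors.

Lemma Fterm_large_factor n r lam alpha P T theta e q a :
  1 <= P -> theta <= 1 -> T <= Rpower P theta -> T <= P * e ->
  box_separated n r lam (T * T + 1) e ->
  Rpower P (theta - 1) <= supnorm n (LamMul r lam alpha) <= T ->
  (1 <= q)%nat ->
  exists v, (v < n)%nat /\
    T <= INR q + P * Rabs (INR q * LamMul r lam alpha v - IZR (a v)).
Proof.
  intros HP Htheta HTpow HTe Hsep [Hlo Hhi] Hq. apply NNPP. intros Hno.
  assert (Hsmall : forall v, (v < n)%nat ->
            INR q + P * Rabs (INR q * LamMul r lam alpha v - IZR (a v)) < T).
  { intros v Hv. apply Rnot_le_lt. intro. apply Hno. eauto. }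
  assert (HTP : T <= P).
  { eapply Rle_trans; [exact HTpow|]. rewrite <- (Rpower_1 P) at 2 by lra.
    apply Rle_Rpower; lra. }
  pose proof (small_factors_nonzero_numerator n r lam alpha P T q a Hsmall Hq HP theta Hlo HTpow)
    as Hnz.
  pose proof (small_factors_bound_numerators n r lam alpha P T q a Hsmall HP Hhi HTP) as Hbox.
  specialize (Hsep a Hbox Hnz (fun i => INR q * alpha i)).
  destruct Hnz as [v0 [Hv0 _]].
  destruct (supnorm_attain n (fun v => IZR (a v) - LamMul r lam (fun i => INR q * alpha i) v))
    as [v [Hv Ev]]; [lia|].
  rewrite Ev, LamMul_scal, Rabs_minus_sym in Hsep.
  specialize (Hsmall v Hv). pose proof (pos_INR q).
  assert (P * e <= P * Rabs (INR q * LamMul r lam alpha v - IZR (a v)))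
    by (apply Rmult_le_compat_l; lra).
  lra.
Qed.

Lemma F_le_inv n r lam alpha P T theta e :
  1 <= P -> 0 < T -> theta <= 1 -> T <= Rpower P theta -> T <= P * e ->
  box_separated n r lam (T * T + 1) e ->
  Rpower P (theta - 1) <= supnorm n (LamMul r lam alpha) <= T ->
  F_le n r lam alpha P (/ T).
Proof.
  intros HP HT Htheta HTpow HTe Hsep Hal q a Hq.
  destruct (Fterm_large_factor n r lam alpha P T theta e q a HP Htheta HTpow HTe Hsep Hal Hq)
    as [v [Hv Hlarge]].
  eapply Rle_trans.
  - apply (prodR_le_factor n _ v); [|exact Hv].
    intros u _. apply Fterm_factor_bounds; [lra | exact Hq].
  - apply Rinv_le_contravar; [exact HT | exact Hlarge].
Qed.

Theorem mainTheorem8 (n r : nat) (lam : nat -> nat -> R) :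
  irrational_hyp n r lam ->
  exists theta0 : R, 0 < theta0 /\
  forall theta : R, 0 < theta < theta0 ->
  exists T : R -> R,
    (forall P, 1 <= P -> 1 <= T P) /\
    (forall P1 P2, 1 <= P1 -> P1 <= P2 -> T P1 <= T P2) /\
    (forall M, exists P0, 1 <= P0 /\ forall P, P0 <= P -> M <= T P) /\
    (forall P, 1 <= P -> T P <= Rpower P theta) /\
    (forall P, 1 <= P ->
       forall alpha : nat -> R,
         Rpower P (theta - 1) <= supnorm n (LamMul r lam alpha) <= T P ->
         F_le n r lam alpha P (/ T P)).
Proof.
  intros Hirr. exists 1. split; [lra|]. intros theta [Htheta Htheta1].
  destruct (functional_choice _ (separation_bound n r lam Hirr)) as [sep Hsep].
  set (e := fun k => sep (INR (S k) * INR (S k) + 1)).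
  destruct (slow_level theta e Htheta (fun k => proj1 (Hsep _)))
    as [k [Hmono [Hunbounded [Hpow Hsmall]]]].
  exists (fun P => INR (S (k P))). split; [|split; [|split; [|split]]].
  - intros P _. rewrite S_INR. pose proof (pos_INR (k P)). lra.
  - intros P1 P2 _ H. apply le_INR, le_n_S, Hmono, H.
  - exact Hunbounded.
  - exact Hpow.
  - intros P HP alpha Hal. destruct (Nat.eq_dec (k P) 0) as [E|Hne].
    + rewrite E. simpl. rewrite Rinv_1. apply F_le_one. lra.
    + apply F_le_inv with theta (e (k P)); try lra; auto.
      * apply lt_0_INR. lia.
      * apply Hsmall. lia.
      * apply (proj2 (Hsep _)).
Qed.
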